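(* Let $d\in\mathbb{Z}_{\ge1}$, $\gamma\in\mathbb{Z}_{\ge2}$, and let integers $y(\ell),x^{\mathrm{bin}}(\ell),z(\ell)$ ($0\le\ell\le d-1$), $r(\ell)$ ($0\le\ell\le d$) form a solution of the constraint system $\mathcal{S}(d,\gamma)$. If $r(d)=\gamma^i$ for some integer $i$ with $1\le i\le 2^d-1$, then $(x^{\mathrm{bin}}(0),\dots,x^{\mathrm{bin}}(d-1))$ is the binary encoding of $i$, i.e. $i=\sum_{\ell=0}^{d-1}2^\ell x^{\mathrm{bin}}(\ell)$.
   Context: Constraint system $\mathcal{S}(d,\gamma)$: for given integers $d\ge1$, $\gamma\ge2$, integer variables $y(\ell),x^{\mathrm{bin}}(\ell),z(\ell)$ for $\ell\in\{0,\dots,d-1\}$ and $r(\ell)$ for $\ell\in\{0,\dots,d\}$, subject to, for every $\ell\in\{0,\dots,d-1\}$ (writing $g_\ell:=\gamma^{2^\ell}$): (C1) $y(\ell)\ge0$; (C2) $y(\ell)\le r(\ell+1)/g_\ell+1/(g_\ell+1)$; (C3) $y(\ell)\ge r(\ell+1)/g_\ell-(g_\ell-1)/g_\ell$; (C4) $x^{\mathrm{bin}}(\ell)\ge0$; (C5) $x^{\mathrm{bin}}(\ell)\le1$; (C6) $x^{\mathrm{bin}}(\ell)\le y(\ell)$; (C7) $y(\ell)\le(g_\ell+1)x^{\mathrm{bin}}(\ell)$; (C8) $r(\ell)\ge0$; (C9) $(g_\ell-1)z(\ell)+r(\ell)=r(\ell+1)$; (C10) $z(\ell)\ge0$; (C11)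 $z(\ell)\ge -g_\ell+g_\ell x^{\mathrm{bin}}(\ell)+r(\ell)$; (C12) $z(\ell)\le g_\ell x^{\mathrm{bin}}(\ell)$; (C13) $z(\ell)\le r(\ell)$; and additionally $r(0)=1$, $r(d)\ge2$, $r(d)\le\gamma^{2^d-1}$. *)

From mathcomp Require Import all_boot all_order all_algebra.
Set Implicit Arguments. Unset Strict Implicit. Unset Printing Implicit Defensive.
Import Order.TTheory GRing.Theory Num.Theory.
Local Open Scope ring_scope.

Definition gpow (gamma : int) (l : nat) : int := gamma ^+ (2 ^ l)%N.

(* The variables are integer-valued
   functions on nat; only the indices 0..d-1 (resp. 0..d for r) matter.
   Fractional constraints (C2),(C3) are interpreted over the rationals. *)
Definition system_S (d : nat) (gamma : int)
  (y xbin z r : nat -> int) : Prop :=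
  (forall l : nat, (l < d)%N ->
     let g := gpow gamma l in
     0 <= y l /\
         (y l)%:~R <= (r l.+1)%:~R / g%:~R + 1 / (g%:~R + 1) :> rat /\
         (y l)%:~R >= (r l.+1)%:~R / g%:~R - (g%:~R - 1) / g%:~R :> rat /\
         0 <= xbin l /\
         xbin l <= 1 /\
         xbin l <= y l /\
         y l <= (g + 1) * xbin l /\
         0 <= r l /\
         (g - 1) * z l + r l = r l.+1 /\
         0 <= z l /\
         z l >= - g + g * xbin l + r l /\
         z l <= g * xbin l
       /\ z l <= r l)
  /\ r 0%N = 1
  /\ 2 <= r d
  /\ r d <= gamma ^+ (2 ^ d - 1)%N.

(* Constraints (C9)-(C13) force, at each level, either z = 0 (when the bit
   is 0) or z = r (when the bit is 1), so that r(l+1) = r(l) * g_l^(xbin l).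
   Since r(0) = 1 and g_l = gamma^(2^l), this gives r(l) = gamma^(sum of
   2^k xbin(k) over k < l), and r(d) = gamma^i together with the injectivity
   of k |-> gamma^k for gamma >= 2 identifies that exponent with i. *)
From mathcomp Require Import all_boot all_order all_algebra.
From mathcomp Require Import zify.
Set Implicit Arguments. Unset Strict Implicit.
Import Order.TTheory GRing.Theory Num.Theory.
Local Open Scope ring_scope.

Lemma bit_gate_update (g x z r r' : int) :
  0 <= x -> x <= 1 -> (g - 1) * z + r = r' -> 0 <= z ->
  - g + g * x + r <= z -> z <= g * x -> z <= r ->
  r' = r * g ^+ `|x|%N.
Proof.
move=> x_ge0 x_le1 <- z_ge0 z_lb z_ub z_le_r.
have [|] : x = 0 \/ x = 1 by lia.
- move=> x0; subst x.
  have -> : z = 0 by rewrite mulr0 in z_ub; lia.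
  by rewrite mulr0 add0r expr0 mulr1.
- move=> x1; subst x.
  have -> : z = r by rewrite mulr1 in z_lb; lia.
  by rewrite expr1 mulrBl mul1r subrK mulrC.
Qed.

Definition bin_exponent (x : nat -> int) (n : nat) : nat :=
  \sum_(k < n) 2 ^ k * `|x k|.

Lemma bin_exponentS (x : nat -> int) (n : nat) :
  bin_exponent x n.+1 = (bin_exponent x n + 2 ^ n * `|x n|)%N.
Proof. by rewrite /bin_exponent big_ord_recr. Qed.

Section SystemS.

Variables (d : nat) (gamma : int) (y xbin z r : nat -> int).
Hypothesis hS : system_S d gamma y xbin z r.

Lemma system_S_xbin_ge0 (l : nat) : (l < d)%N -> 0 <= xbin l.
Proof. by case: hS => /(_ l) C _ /C [_ [_ [_ []]]]. Qed.

Lemma system_S_rS (l : nat) :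
  (l < d)%N -> r l.+1 = r l * gpow gamma l ^+ `|xbin l|%N.
Proof.
case: hS => /(_ l) C _ /C /=.
move=> [_ [_ [_ [x_ge0 [x_le1 [_ [_ [_ [c9 [c10 [c11 [c12 c13]]]]]]]]]]]].
exact: bit_gate_update x_ge0 x_le1 c9 c10 c11 c12 c13.
Qed.

Lemma system_S_r (l : nat) :
  (l <= d)%N -> r l = gamma ^+ bin_exponent xbin l.
Proof.
elim: l => [_|l IH lt_ld].
  by case: hS => _ [-> _]; rewrite /bin_exponent big_ord0.
rewrite system_S_rS // IH 1?ltnW // bin_exponentS exprD.
by rewrite /gpow -exprM.
Qed.

End SystemS.

Theorem mainTheorem7 (d : nat) (gamma : int) (y xbin z r : nat -> int) (i : nat) :
  (1 <= d)%N -> 2 <= gamma ->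
  system_S d gamma y xbin z r ->
  (1 <= i)%N -> (i <= 2 ^ d - 1)%N ->
  r d = gamma ^+ i ->
  (i%:Z = \sum_(l < d) (2 ^ l)%N%:Z * xbin l).
Proof.
move=> _ gamma_ge2 hS _ _ rd.
have exp_eq : bin_exponent xbin d = i.
  apply: (@ieexprIn _ gamma); [lia | apply/eqP; lia |].
  by rewrite -(system_S_r hS) // rd.
rewrite -exp_eq /bin_exponent -natz natr_sum; apply: eq_bigr => l _.
by rewrite natrM !natz gez0_abs // (system_S_xbin_ge0 hS).
Qed.
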